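(* Let $G$ be a complete edge-colored graph. The following are equivalent: (i) $G$ is the graph representation of a symbolic ultrametric; (ii) $G$ does not contain a rainbow triangle and every monochromatic subgraph of $G$ is the simple permutation graph (for some labeling) of a separable permutation. Moreover, if $G$ is the graph representation of a symbolic ultrametric, then for every induced subgraph $H$ of $G$, every monochromatic subgraph of $H$ is the simple permutation graph of a separable permutation.
   Context: A complete edge-colored graph $G=(V,E_1,\dots,E_k)$ is a complete graph on finite $V$ with edges partitioned into nonempty color classes $E_i$; its monochromatic subgraphs are $G_{|i}=(V,E_i)$; induced subgraphs keep colors. A rainbow triangle is a set of three vertices whose three edges have pairwise distinct colors. A labeling is a bijection $\ell:V\to\{1,\dots,|V|\}$. A graph $(V,E)$ with labeling $\ell$ is a simple permutation graph of a permutation $\pi$ of $\{1,\dots,|V|\}$ if for all $u,v$ with $\ell(u)>\ell(v)$: $\{u,v\}\in E$ iff $\pi^{-1}(\ell(u))<\pi^{-1}(\ell(v))$. A permutation is separable if it contains neither of the patterns $2413$ and $3142$ (equivalently, it can be built from the one-element permutation by direct and skew sums). For a nonempty finite set $X$, a surjective map $\delta:X\times X\to\{1,\dots,k\}$ is a symbolic ultrametric if (U1) $\delta(x,y)=\delta(y,x)$; (U2) $|\{\delta(x,y),\delta(x,z),\delta(y,z)\}|\le2$ for all $x,y,z$; (U3) there is no 4-element subset $\{x,y,u,v\}$ with $\delta(x,y)=\delta(y,u)=\delta(u,v)\ne\delta(v,y)=\delta(x,v)=\delta(x,u)$. Its graph representation is the complete graph on $X$ with edge $\{x,y\}$ colored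 $\delta(x,y)$. *)

From mathcomp Require Import all_boot all_order all_fingroup.
Set Implicit Arguments. Unset Strict Implicit. Unset Printing Implicit Defensive.

(* The colour of the edge {x,y} (x != y) is
   c x y; values of c on the diagonal are irrelevant. *)
Definition complete_ecg (V : finType) (k : nat) (c : V -> V -> 'I_k) : Prop :=
  (forall x y : V, x != y -> c x y = c y x) /\
  (forall i : 'I_k, exists x y : V, x != y /\ c x y = i).

Definition has_rainbow_triangle (V : finType) (k : nat) (c : V -> V -> 'I_k) : Prop :=
  exists x y z : V, uniq [:: x; y; z] /\ #|[set c x y; c x z; c y z]| = 3.

Definition mono (V : finType) (k : nat) (c : V -> V -> 'I_k) (i : 'I_k) : rel V :=
  fun u v => (u != v) && (c u v == i).

Definition induced (V : finType) (k : nat) (c : V -> V -> 'I_k) (W : {set V})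
  : {x : V | x \in W} -> {x : V | x \in W} -> 'I_k :=
  fun u v => c (val u) (val v).

(* Pattern containment for a permutation p of 'I_n in one-line notation
   p 0, p 1, ..., p (n-1); the pattern s is given in one-line notation
   (0-based). *)
Definition contains_pattern (n : nat) (p : 'S_n) (s : seq nat) : Prop :=
  exists f : 'I_(size s) -> 'I_n,
    (forall a b : 'I_(size s), a < b -> f a < f b) /\
    (forall a b : 'I_(size s), (p (f a) < p (f b)) = (nth 0 s a < nth 0 s b)).

(* Separable: avoids 2413 and 3142 (here written 0-based). *)
Definition separable (n : nat) (p : 'S_n) : Prop :=
  ~ contains_pattern p [:: 1; 3; 0; 2] /\ ~ contains_pattern p [:: 2; 0; 3; 1].

Definition simple_perm_graph (T : finType) (adj : rel T)
    (l : T -> 'I_#|T|) (p : 'S_#|T|) : Prop :=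
  bijective l /\
  forall u v : T, l v < l u -> (adj u v <-> ((p^-1)%g (l u) < (p^-1)%g (l v))).

Definition is_sep_perm_graph (T : finType) (adj : rel T) : Prop :=
  exists (l : T -> 'I_#|T|) (p : 'S_#|T|), separable p /\ simple_perm_graph adj l p.

Definition symbolic_ultrametric (X : finType) (k : nat) (d : X -> X -> 'I_k) : Prop :=
  0 < #|X| /\
  (forall i : 'I_k, exists x y : X, d x y = i) /\
  (forall x y : X, d x y = d y x) /\
  (forall x y z : X, #|[set d x y; d x z; d y z]| <= 2) /\
  ~ (exists x y u v : X, uniq [:: x; y; u; v] /\
       d x y = d y u /\ d y u = d u v /\ d u v != d v y /\
       d v y = d x v /\ d x v = d x u).

Definition graph_rep (X : finType) (k : nat) (d c : X -> X -> 'I_k) : Prop :=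
  forall x y : X, x != y -> c x y = d x y.
Arguments induced {V k} c W _ _.

From mathcomp Require Import all_boot all_order all_fingroup zify.
Set Implicit Arguments. Unset Strict Implicit. Unset Printing Implicit Defensive.

(* A symbolic ultrametric is the same thing as a colouring without rainbow
   triangles (axiom U2) none of whose colour classes contains an induced path
   on four vertices: given U2, a monochromatic induced path x-y-u-v forces
   exactly the colour pattern excluded by U3, and conversely.  It remains to
   see that P4-free graphs are the permutation graphs of separable
   permutations.  A P4-free graph on at least two vertices splits into two
   parts that are either completely joined or not joined at all (induction on
   the vertices, passing to the complement, which is again P4-free).
   Realising each part by two linear orders and concatenating these, in the
   same or in opposite order, realises the whole graph as a permutation graph.
   In a permutation graph an induced P4 is the same as an occurrence of the
   pattern 2413 or 3142.  Finally, induced subgraphs of P4-free graphs are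
   P4-free. *)

Definition P4_free (T : eqType) (e : rel T) : Prop :=
  forall a b c d : T, uniq [:: a; b; c; d] ->
    e a b -> e b c -> e c d -> ~~ e a c -> ~~ e a d -> ~~ e b d -> False.

Lemma uniq4E (T : eqType) (a b c d : T) :
  uniq [:: a; b; c; d] = [&& a != b, a != c, a != d, b != c, b != d & c != d].
Proof. by rewrite /= !inE !negb_or andbT -!andbA. Qed.

Lemma eq_P4_free (T : eqType) (e1 e2 : rel T) : e1 =2 e2 -> P4_free e1 -> P4_free e2.
Proof. by move=> e12 e1P4 a b c d; rewrite -!e12; exact: e1P4. Qed.

Lemma P4_free_relpre (T T' : eqType) (f : T' -> T) (e : rel T) :
  injective f -> P4_free e -> P4_free (relpre f e).
Proof.
move=> f_inj eP4 a b c d abcd; apply: eP4.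
by rewrite -(map_inj_uniq f_inj) in abcd.
Qed.

Definition compl_rel (T : eqType) (e : rel T) : rel T :=
  fun x y => (x != y) && ~~ e x y.

Lemma compl_rel_sym (T : eqType) (e : rel T) : symmetric e -> symmetric (compl_rel e).
Proof. by move=> e_sym x y; rewrite /compl_rel eq_sym e_sym. Qed.

(* The path a-b-c-d is self-complementary: its complement is the path c-a-d-b. *)
Lemma P4_free_compl (T : eqType) (e : rel T) :
  symmetric e -> P4_free e -> P4_free (compl_rel e).
Proof.
move=> e_sym eP4 a b c d abcd; move: (abcd).
rewrite uniq4E => /and5P [ab ac ad bc /andP [bd cd]].
rewrite /compl_rel ab ac ad bc bd cd /= !negbK => nab nbc ncd ac' ad' bd'.
apply: (eP4 c a d b) => //; last by rewrite e_sym.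
- by rewrite uniq4E eq_sym ac cd eq_sym bc ad ab eq_sym bd.
- by rewrite e_sym.
- by rewrite e_sym.
Qed.

Definition homogeneous (T : finType) (e : rel T) (A B : {set T}) (b : bool) :=
  forall x y, x \in A -> y \in B -> e x y = b.

Definition homogeneous_split (T : finType) (e : rel T) (S A B : {set T}) (b : bool) :=
  [/\ A :|: B = S, [disjoint A & B], A != set0, B != set0 & homogeneous e A B b].

Lemma homogeneous_sym (T : finType) (e : rel T) A B b :
  symmetric e -> homogeneous e A B b -> homogeneous e B A b.
Proof. by move=> e_sym hAB x y xB yA; rewrite e_sym hAB. Qed.

Lemma homogeneous_split_compl (T : finType) (e : rel T) S A B b :
  homogeneous_split (compl_rel e) S A B b <-> homogeneous_split e S A B (~~ b).
Proof.
have complE x y : [disjoint A & B] -> x \in A -> y \in B -> compl_rel e x y = ~~ e x y.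
  move=> dAB xA yB; rewrite /compl_rel.
  by case: eqP => // xy; move: (disjointFr dAB xA); rewrite xy yB.
split=> -[SAB dAB nA nB hAB]; split=> // x y xA yB; have := hAB x y xA yB.
  by rewrite complE // => <-; rewrite negbK.
by rewrite complE // => ->; rewrite negbK.
Qed.

Section SplitExtension.
Variables (T : finType) (e : rel T).
Hypotheses (e_sym : symmetric e) (eP4 : P4_free e).

Lemma nonadjacent_split_add (A B : {set T}) v :
  homogeneous_split e (A :|: B) A B false -> v \notin A :|: B ->
  (forall a, a \in A -> ~~ e v a) ->
  homogeneous_split e (v |: (A :|: B)) A (v |: B) false.
Proof.
move=> [_ dAB nA _ hAB] vAB vA; split=> //.
- by rewrite setUCA.
- rewrite -setI_eq0 -subset0; apply/subsetP => x; rewrite !inE => /andP [xA].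
  case/orP => [/eqP xv|xB]; first by move: vAB; rewrite -xv inE xA.
  by rewrite (disjointFr dAB xA) in xB.
- by apply/set0Pn; exists v; rewrite !inE eqxx.
move=> x y xA /setU1P [->|yB]; last exact: hAB.
by rewrite e_sym; apply/negbTE/vA.
Qed.

(* An edge x-y would make x-y-v-b an induced path. *)
Lemma nonneighbour_neighbour_nonadjacent (A B : {set T}) v b x y :
  [disjoint A & B] -> homogeneous e A B false -> v \notin A :|: B ->
  b \in B -> e v b -> x \in A -> y \in A -> ~~ e v x -> e v y -> ~~ e x y.
Proof.
move=> dAB hAB vAB bB vb xA yA vx vy; apply/negP => xy.
have notin_AB z : z \in A -> z != v.
  by move=> zA; apply: contraNneq vAB => <-; rewrite inE zA.
have notin_B z : z \in A -> z != b.
  by move=> zA; apply: contraTneq zA => ->; rewrite (disjointFl dAB bB).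
have xyvb : uniq [:: x; y; v; b].
  rewrite uniq4E ?(notin_AB x, notin_AB y, notin_B x, notin_B y) //=; apply/andP; split.
  + by apply: contraNneq vx => ->.
  + by apply: contraNneq vAB => ->; rewrite inE bB orbT.
apply: (eP4 xyvb xy _ vb).
- by rewrite e_sym.
- by rewrite e_sym.
- by rewrite hAB.
- by rewrite hAB.
Qed.

Lemma nonadjacent_split_extend (S A B : {set T}) v :
  homogeneous_split e S A B false -> v \notin S ->
  exists A' B' b', homogeneous_split e (v |: S) A' B' b'.
Proof.
move=> sAB vS; have [SAB dAB nA nB hAB] := sAB; subst S.
have [/forall_inP vA|] := boolP [forall a in A, ~~ e v a].
  by exists A, (v |: B), false; apply: nonadjacent_split_add.
have [/forall_inP vB|] := boolP [forall b in B, ~~ e v b].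
  exists B, (v |: A), false; rewrite [A :|: B]setUC.
  apply: nonadjacent_split_add => //.
  - by split; rewrite 1?setUC 1?disjoint_sym //; exact: homogeneous_sym.
  - by rewrite setUC.
move=> /forall_inPn [b0 b0B /negbNE vb0] /forall_inPn [a0 a0A /negbNE va0].
pose N := [set x in A :|: B | e v x]; pose X := [set x in A :|: B | ~~ e v x].
have [X0|nX] := eqVneq X set0.
  exists [set v], (A :|: B), true; split=> //.
  - by rewrite disjoints1.
  - by apply/set0Pn; exists v; rewrite inE.
  - by apply/set0Pn; exists a0; rewrite inE a0A.
  move=> x y /set1P -> yAB; apply: negbNE; apply: contra_eqN X0 => vy.
  by apply/set0Pn; exists y; rewrite inE yAB.
exists X, (v |: N), false; split=> //.
- apply/setP => x; rewrite !inE.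
  by case: (x == v); case: (x \in A); case: (x \in B); case: (e v x).
- rewrite -setI_eq0 -subset0; apply/subsetP => x; rewrite !inE.
  case: eqVneq => [->|_]; first by move: vS; rewrite inE => /negbTE ->.
  by case: (e v x); rewrite ?andbF.
- by apply/set0Pn; exists v; rewrite !inE eqxx.
move=> x y; rewrite [x \in X]inE => /andP [xAB vx] /setU1P [->|].
  by rewrite e_sym (negbTE vx).
rewrite inE => /andP [yAB vy]; apply/negbTE.
case/setUP: xAB => xA; case/setUP: yAB => yB.
- exact: (nonneighbour_neighbour_nonadjacent dAB hAB vS b0B vb0).
- by rewrite hAB.
- by rewrite e_sym hAB.
- rewrite setUC in vS; rewrite disjoint_sym in dAB.
  exact: (nonneighbour_neighbour_nonadjacent dAB (homogeneous_sym e_sym hAB) vS a0A va0).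
Qed.

End SplitExtension.

Lemma homogeneous_split_extend (T : finType) (e : rel T) (S A B : {set T}) b v :
  symmetric e -> P4_free e -> homogeneous_split e S A B b -> v \notin S ->
  exists A' B' b', homogeneous_split e (v |: S) A' B' b'.
Proof.
move=> e_sym eP4; case: b => [sAB vS|]; last exact: nonadjacent_split_extend.
have /homogeneous_split_compl sAB' : homogeneous_split e S A B (~~ false) by [].
have [A' [B' [b' /homogeneous_split_compl sAB'v]]] :=
  nonadjacent_split_extend (compl_rel_sym e_sym) (P4_free_compl e_sym eP4) sAB' vS.
by exists A', B', (~~ b').
Qed.

Lemma exists_homogeneous_split (T : finType) (e : rel T) (S : {set T}) :
  symmetric e -> P4_free e -> 1 < #|S| -> exists A B b, homogeneous_split e S A B b.
Proof.
move=> e_sym eP4; have [n] := ubnP #|S|; elim: n S => // n IH S Sn S_gt1.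
have [v vS] : exists v, v \in S by apply/card_gt0P; lia.
have vSv : v \notin S :\ v by rewrite !inE eqxx.
have cardSv : #|S| = #|S :\ v|.+1 by rewrite (cardsD1 v S) vS.
rewrite -(setD1K vS); have [Sv_le1|Sv_gt1] := leqP #|S :\ v| 1.
  have /cards1P [w Sv_w] : #|S :\ v| == 1 by lia.
  move: vSv; rewrite Sv_w inE => vw.
  exists [set v], [set w], (e v w); split.
  - by [].
  - by rewrite disjoints1 inE.
  - by apply/set0Pn; exists v; rewrite inE.
  - by apply/set0Pn; exists w; rewrite inE.
  - by move=> x y /set1P -> /set1P ->.
have [A [B [b sAB]]] := IH (S :\ v) ltac:(lia) Sv_gt1.
exact: homogeneous_split_extend sAB vSv.
Qed.

Lemma index_cat_lt (T : eqType) (s t : seq T) x y :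
  (index x (s ++ t) < index y (s ++ t)) =
  if x \in s then (y \notin s) || (index x s < index y s)
  else (y \notin s) && (index x t < index y t).
Proof.
rewrite !index_cat; have := index_mem x s; have := index_mem y s.
by case: (x \in s); case: (y \in s) => /= ys xs; lia.
Qed.

Lemma cat_uniq_disjoint (T : finType) (s t : seq T) (A B : {set T}) :
  [disjoint A & B] -> uniq s -> uniq t -> s =i A -> t =i B -> uniq (s ++ t).
Proof.
move=> dAB us ut sA tB; rewrite cat_uniq us ut andbT /=.
by apply/hasPn => x; rewrite /= tB sA => xB; rewrite (disjointFl dAB xB).
Qed.

Section Realizer.
Variables (T : finType) (e : rel T).
Hypothesis e_sym : symmetric e.

Definition realizer (S : {set T}) (s1 s2 : seq T) :=
  [/\ uniq s1, uniq s2, s1 =i S, s2 =i S &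
   {in S &, forall u v, u != v ->
      e u v = ((index u s1 < index v s1) != (index u s2 < index v s2))}].

(* Listing B before A in the second order turns every pair in A x B into an
   inversion. *)
Lemma realizer_union (A B : {set T}) a1 a2 b1 b2 b :
  [disjoint A & B] -> homogeneous e A B b -> realizer A a1 a2 -> realizer B b1 b2 ->
  realizer (A :|: B) (a1 ++ b1) (if b then b2 ++ a2 else a2 ++ b2).
Proof.
move=> dAB hAB [ua1 ua2 ma1 ma2 eA] [ub1 ub2 mb1 mb2 eB].
have dBA : [disjoint B & A] by rewrite disjoint_sym.
split.
- exact: cat_uniq_disjoint dAB ua1 ub1 ma1 mb1.
- by case: b {hAB}; [exact: cat_uniq_disjoint dBA ub2 ua2 mb2 ma2
                    | exact: cat_uniq_disjoint dAB ua2 ub2 ma2 mb2].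
- by move=> x; rewrite mem_cat ma1 mb1 inE.
- by case: b {hAB} => x; rewrite mem_cat ma2 mb2 inE // orbC.
move=> u v uAB vAB uv.
have inB x : x \in A :|: B -> (x \in B) = (x \notin A).
  by rewrite inE; case: (boolP (x \in A)) => // xA _; exact: (disjointFr dAB xA).
rewrite !index_cat_lt !ma1; case: b hAB => hAB.
all: rewrite !index_cat_lt ?ma2 ?mb2 ?(inB u) ?(inB v) //.
all: case/setUP: uAB => [uA|uB]; case/setUP: vAB => [vA|vB].
all: rewrite ?uA ?vA ?(disjointFl dAB uB) ?(disjointFl dAB vB) /=.
all: by [apply: eA | apply: eB | rewrite hAB | rewrite e_sym hAB].
Qed.

Lemma exists_realizer (S : {set T}) : P4_free e -> exists s1 s2, realizer S s1 s2.
Proof.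
move=> eP4; have [n] := ubnP #|S|; elim: n S => // n IH S Sn.
have [S_le1|S_gt1] := leqP #|S| 1.
  exists (enum S), (enum S); split; rewrite ?enum_uniq //; try exact: mem_enum.
  by move=> u v uS vS; rewrite (card_le1_eqP S_le1 u v uS vS) eqxx.
have [A [B [b [SAB dAB nA nB hAB]]]] := exists_homogeneous_split e_sym eP4 S_gt1.
have cardAB : #|S| = #|A| + #|B|.
  by rewrite -SAB cardsU (disjoint_setI0 dAB) cards0 subn0.
move: nA nB; rewrite -!card_gt0 => nA nB.
have [a1 [a2 rA]] := IH A ltac:(lia).
have [b1 [b2 rB]] := IH B ltac:(lia).
by rewrite -SAB; exists (a1 ++ b1), (if b then b2 ++ a2 else a2 ++ b2);
  exact: realizer_union.
Qed.

End Realizer.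

(* Labels L and positions P of an induced path a-b-c-d in a permutation graph,
   where adjacency means that the two orders disagree: once the path is
   oriented so that Pa < Pd, only the patterns 2413 and 3142 remain. *)
Lemma P4_inversion_configurations (La Lb Lc Ld Pa Pb Pc Pd : nat) : Pa < Pd ->
    (La < Lb /\ Pb < Pa \/ Lb < La /\ Pa < Pb) ->
    (Lb < Lc /\ Pc < Pb \/ Lc < Lb /\ Pb < Pc) ->
    (Lc < Ld /\ Pd < Pc \/ Ld < Lc /\ Pc < Pd) ->
    (La < Lc /\ Pa < Pc \/ Lc < La /\ Pc < Pa) ->
    (La < Ld /\ Pa < Pd \/ Ld < La /\ Pd < Pa) ->
    (Lb < Ld /\ Pb < Pd \/ Ld < Lb /\ Pd < Pb) ->
  [/\ Pa < Pc, Pc < Pb, Pb < Pd & [/\ Lb < La, La < Ld & Ld < Lc]] \/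
  [/\ Pb < Pa, Pa < Pd, Pd < Pc & [/\ La < Lc, Lc < Lb & Lb < Ld]].
Proof.
move=> ad; do 6 case=> [[? ?]|[? ?]]; first [by left; split | by right; split | lia].
Qed.

Lemma exists_index_ord (T : finType) (s : seq T) : uniq s -> s =i [set: T] ->
  exists2 r : T -> 'I_#|T|, injective r & forall u, r u = index u s :> nat.
Proof.
move=> s_uniq s_full.
have s_all x : x \in s by rewrite s_full inE.
have size_s : size s = #|T|.
  by rewrite -(card_uniqP s_uniq); apply: eq_card => x; rewrite s_all.
have index_lt u : index u s < #|T| by rewrite -size_s index_mem.
exists (fun u => Ordinal (index_lt u)) => // u v /(congr1 val) /=.
exact: index_inj.
Qed.

Section PermutationGraph.
Variables (T : finType) (adj : rel T).
Hypothesis adj_sym : symmetric adj.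

Lemma simple_perm_graph_of_ranks (l r : T -> 'I_#|T|) : injective l -> injective r ->
  (forall u v, u != v -> adj u v = ((l u < l v) != (r u < r v))) ->
  exists p, simple_perm_graph adj l p.
Proof.
move=> l_inj r_inj adjE.
have [li lK liK] : bijective l by apply: inj_card_bij l_inj _; rewrite card_ord.
have q_inj : injective (r \o li) by apply: inj_comp r_inj (can_inj liK).
exists (perm q_inj)^-1%g; split=> [|u v vu]; first by exists li.
rewrite invgK !permE /= !lK adjE; last by apply: contraTneq vu => ->; rewrite ltnn.
by rewrite [l u < l v]ltnNge (ltnW vu); case: (r u < r v).
Qed.

Lemma simple_perm_graph_of_realizer s1 s2 : realizer adj [set: T] s1 s2 ->
  exists l p, simple_perm_graph adj l p.
Proof.
move=> [u1 u2 m1 m2 adjE].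
have [l l_inj lE] := exists_index_ord u1 m1.
have [r r_inj rE] := exists_index_ord u2 m2.
exists l; apply: (simple_perm_graph_of_ranks l_inj r_inj) => u v uv.
by rewrite !lE !rE adjE ?inE.
Qed.

Variables (l : T -> 'I_#|T|) (p : 'S_#|T|).
Hypothesis slp : simple_perm_graph adj l p.

(* [l u] is the value of the vertex [u] in the one-line notation of [p], and
   [pos u] is its position. *)
Local Notation pos u := (nat_of_ord ((p^-1)%g (l u))).

Lemma adj_inversion u v : pos u < pos v -> adj u v = (l v < l u).
Proof.
have [_ lp] := slp; move=> uv.
case: (ltngtP (l v) (l u)) => [vu|uv'|/val_inj luv].
- exact/(lp u v vu).
- rewrite adj_sym; apply/negbTE/negP => /(lp v u uv').
  by rewrite ltnNge (ltnW uv).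
- by move: uv; rewrite luv ltnn.
Qed.

Lemma label_inj : injective l.
Proof. exact: bij_inj (proj1 slp). Qed.

Lemma pos_inj u v : pos u = pos v -> u = v.
Proof. by move/val_inj/perm_inj/label_inj. Qed.

Lemma adj_orders u v : u != v -> adj u v ->
  (l u < l v /\ pos v < pos u) \/ (l v < l u /\ pos u < pos v).
Proof.
move=> uv; case: (ltngtP (pos u) (pos v)) => [lt|gt|/pos_inj eq].
- by rewrite adj_inversion // => vu; right.
- by rewrite adj_sym adj_inversion // => vu; left.
- by rewrite eq eqxx in uv.
Qed.

Lemma nonadj_orders u v : u != v -> ~~ adj u v ->
  (l u < l v /\ pos u < pos v) \/ (l v < l u /\ pos v < pos u).
Proof.
move=> uv; have l_uv : l u != l v :> nat.
  by apply: contra uv => /eqP/val_inj/label_inj->.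
case: (ltngtP (pos u) (pos v)) => [lt|gt|/pos_inj eq].
- by rewrite adj_inversion // -leqNgt leq_eqVlt (negbTE l_uv) => vu; left.
- rewrite adj_sym adj_inversion // -leqNgt leq_eqVlt eq_sym (negbTE l_uv).
  by move=> vu; right.
- by rewrite eq eqxx in uv.
Qed.

Lemma pattern_vertices s : contains_pattern p s ->
  exists w : 'I_(size s) -> T, injective w /\
    forall a b : 'I_(size s), a < b -> adj (w a) (w b) = (nth 0 s b < nth 0 s a).
Proof.
move=> [f [f_incr f_pat]]; have [[li lK liK] _] := slp.
have posw a : (p^-1)%g (l (li (p (f a)))) = f a by rewrite liK permK.
exists (fun a => li (p (f a))); split.
- move=> a b /(can_inj liK)/perm_inj fab.
  by case: (ltngtP a b) => [/f_incr|/f_incr|/val_inj //]; rewrite fab ltnn.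
- by move=> a b ab; rewrite adj_inversion ?posw ?f_incr // !liK f_pat.
Qed.

Lemma contains_pattern_of_vertices s (w : 'I_(size s) -> T) :
  (forall a b : 'I_(size s), a < b -> pos (w a) < pos (w b)) ->
  (forall a b : 'I_(size s), (l (w a) < l (w b)) = (nth 0 s a < nth 0 s b)) ->
  contains_pattern p s.
Proof.
move=> w_incr w_pat; exists (fun a => (p^-1)%g (l (w a))).
by split=> // a b; rewrite !permKV.
Qed.

Lemma separable_of_P4_free : P4_free adj -> separable p.
Proof.
move=> adjP4; pose o0 : 'I_4 := @Ordinal 4 0 isT; pose o1 : 'I_4 := @Ordinal 4 1 isT.
pose o2 : 'I_4 := @Ordinal 4 2 isT; pose o3 : 'I_4 := @Ordinal 4 3 isT.
split=> /pattern_vertices [w [w_inj w_adj]]; have wP4 := P4_free_relpre w_inj adjP4.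
- apply: (wP4 o0 o2 o1 o3) => //=; by [rewrite w_adj | rewrite adj_sym w_adj].
- apply: (wP4 o1 o0 o3 o2) => //=; by [rewrite w_adj | rewrite adj_sym w_adj].
Qed.

Lemma P4_free_of_separable : separable p -> P4_free adj.
Proof.
move=> [no2413 no3142].
suff P4_pos_lt a b c d : uniq [:: a; b; c; d] -> adj a b -> adj b c -> adj c d ->
    ~~ adj a c -> ~~ adj a d -> ~~ adj b d -> pos a < pos d -> False.
  move=> a b c d abcd ab bc cd ac ad bd; move: (abcd).
  rewrite uniq4E => /and5P [a_b a_c a_d b_c /andP [b_d c_d]].
  case: (ltngtP (pos a) (pos d)) => [|da|/pos_inj eq].
  - exact: P4_pos_lt abcd ab bc cd ac ad bd.
  - apply: (P4_pos_lt d c b a) => //; rewrite 1?adj_sym //.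
    by rewrite uniq4E eq_sym c_d eq_sym b_d eq_sym a_d eq_sym b_c eq_sym a_c eq_sym a_b.
  - by rewrite eq eqxx in a_d.
move=> abcd ab bc cd ac ad bd ad_pos; move: (abcd).
rewrite uniq4E => /and5P [a_b a_c a_d b_c /andP [b_d c_d]].
have [[Pac Pcb Pbd [Lba Lad Ldc]]|[Pba Pad Pdc [Lac Lcb Lbd]]] :=
  P4_inversion_configurations ad_pos
    (adj_orders a_b ab) (adj_orders b_c bc) (adj_orders c_d cd)
    (nonadj_orders a_c ac) (nonadj_orders a_d ad) (nonadj_orders b_d bd).
- apply: no2413; apply: (@contains_pattern_of_vertices _ (nth a [:: a; c; b; d]));
    move=> [[|[|[|[|i]]]] ?] [[|[|[|[|j]]]] ?] //; cbn [nth nat_of_ord];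
    by clear -Pac Pcb Pbd Lba Lad Ldc; lia.
- apply: no3142; apply: (@contains_pattern_of_vertices _ (nth a [:: b; a; d; c]));
    move=> [[|[|[|[|i]]]] ?] [[|[|[|[|j]]]] ?] //; cbn [nth nat_of_ord];
    by clear -Pba Pad Pdc Lac Lcb Lbd; lia.
Qed.

End PermutationGraph.

Lemma cards3_le3 (T : finType) (x y z : T) : #|[set x; y; z]| <= 3.
Proof. by rewrite -setUA cardsU1 cards2; case: (_ \notin _); case: (_ != _). Qed.

Lemma cards3_le2 (T : finType) (x y z : T) :
  (#|[set x; y; z]| <= 2) = ~~ uniq [:: x; y; z].
Proof.
rewrite -setUA cardsU1 cards2 /= !inE andbT.
by case: (x == y); case: (x == z); case: (y == z).
Qed.

Lemma cards3_le2_eq (T : finType) (p q r : T) :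
  #|[set r; p; q]| <= 2 -> p != r -> q != r -> p = q.
Proof.
rewrite cards3_le2 /= !inE andbT negb_and negb_or !negbK => pqr pr qr.
by apply/eqP; move: pqr; rewrite eq_sym (negbTE pr) eq_sym (negbTE qr).
Qed.

Section Colouring.
Variables (V : finType) (k : nat) (c : V -> V -> 'I_k).

Lemma symmetric_mono i :
  (forall x y, x != y -> c x y = c y x) -> symmetric (mono c i).
Proof.
move=> c_sym x y; rewrite /mono eq_sym.
by case: (eqVneq y x) => // yx; rewrite c_sym // eq_sym.
Qed.

Lemma P4_free_mono_induced (W : {set V}) i :
  P4_free (mono c i) -> P4_free (mono (induced c W) i).
Proof.
by move=> iP4; apply: (eq_P4_free _ (P4_free_relpre val_inj iP4)) => u v.
Qed.

Lemma no_rainbow_of_symbolic_ultrametric delta :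
  symbolic_ultrametric delta -> graph_rep delta c -> ~ has_rainbow_triangle c.
Proof.
move=> [_ [_ [_ [U2 _]]]] rep [x [y [z [xyz rainbow]]]].
move: xyz; rewrite /= !inE negb_or andbT => /andP [/andP [xy xz] yz].
by move: (U2 x y z); rewrite -!rep // rainbow.
Qed.

(* Apply (U2) to the triangles xuv and xyv of the path x-y-u-v. *)
Lemma mono_P4_free_of_symbolic_ultrametric delta i :
  symbolic_ultrametric delta -> graph_rep delta c -> P4_free (mono c i).
Proof.
move=> [_ [_ [delta_sym [U2 U3]]]] rep x y u v xyuv; move: (xyuv).
rewrite uniq4E => /and5P [xy xu xv yu /andP [yv uv]].
rewrite /mono xy xu xv yu yv uv /= !rep // => /eqP dxy /eqP dyu /eqP duv dxu dxv dyv.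
have dxu_xv : delta x u = delta x v.
  rewrite delta_sym [delta x v]delta_sym.
  by apply: cards3_le2_eq (U2 u v x) _ _; rewrite -delta_sym duv.
have dxv_yv : delta x v = delta y v.
  by apply: cards3_le2_eq (U2 x y v) _ _; rewrite dxy.
apply: U3; exists x, y, u, v; split=> //.
by rewrite dxy dyu duv [delta v y]delta_sym -dxv_yv dxu_xv eq_sym.
Qed.

Lemma symbolic_ultrametric_of_colouring :
  0 < k -> complete_ecg c -> ~ has_rainbow_triangle c ->
  (forall i, P4_free (mono c i)) -> symbolic_ultrametric c.
Proof.
move=> k_gt0 [c_sym c_surj] no_rainbow monoP4.
have c_sym' x y : c x y = c y x by case: (eqVneq x y) => [->|/c_sym].
split; [|split; [|split; [|split]]] => //.
- by have [x [_ _]] := c_surj (Ordinal k_gt0); apply/card_gt0P; exists x.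
- by move=> i; have [x [y [_ cxy]]] := c_surj i; exists x, y.
- move=> x y z; rewrite cards3_le2; apply/negP => colours.
  have xyz : uniq [:: x; y; z].
    rewrite /= !inE !andbT !negb_or -andbA; apply/and3P.
    by split; apply/eqP => E; move: colours;
      rewrite E /= !inE ?(c_sym' y z) !eqxx ?orbT /= ?andbF.
  apply: no_rainbow; exists x, y, z; split=> //.
  by apply/eqP; rewrite eqn_leq cards3_le3 ltnNge cards3_le2 colours.
move=> [x [y [u [v [xyuv [cxy_yu [cyu_uv [cuv_vy [cvy_xv cxv_xu]]]]]]]]].
move: (xyuv); rewrite uniq4E => /and5P [xy xu xv yu /andP [yv uv]].
apply: (monoP4 (c x y) x y u v xyuv); rewrite /mono ?xy ?xu ?xv ?yu ?yv ?uv //=.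
- by rewrite cxy_yu.
- by rewrite cxy_yu cyu_uv.
- by rewrite -cxv_xu -cvy_xv cxy_yu cyu_uv eq_sym.
- by rewrite -cvy_xv cxy_yu cyu_uv eq_sym.
- by rewrite c_sym' cxy_yu cyu_uv eq_sym.
Qed.

End Colouring.

Lemma is_sep_perm_graph_of_P4_free (T : finType) (adj : rel T) :
  symmetric adj -> P4_free adj -> is_sep_perm_graph adj.
Proof.
move=> adj_sym adjP4.
have [s1 [s2 /simple_perm_graph_of_realizer [l [p slp]]]] :=
  exists_realizer adj_sym [set: T] adjP4.
by exists l, p; split=> //; apply: separable_of_P4_free slp adjP4.
Qed.

Lemma P4_free_of_is_sep_perm_graph (T : finType) (adj : rel T) :
  symmetric adj -> is_sep_perm_graph adj -> P4_free adj.
Proof. by move=> adj_sym [l [p [sep slp]]]; apply: P4_free_of_separable slp sep. Qed.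

Theorem corollary6p6 (V : finType) (k : nat) (c : V -> V -> 'I_k) :
  0 < k -> complete_ecg c ->
  ((exists d : V -> V -> 'I_k, symbolic_ultrametric d /\ graph_rep d c) <->
   (~ has_rainbow_triangle c /\ forall i : 'I_k, is_sep_perm_graph (mono c i))) /\
  ((exists d : V -> V -> 'I_k, symbolic_ultrametric d /\ graph_rep d c) ->
   forall (W : {set V}) (i : 'I_k),
     (exists u v : {x : V | x \in W}, u != v /\ induced c W u v = i) ->
     is_sep_perm_graph (mono (induced c W) i)).
Proof.
move=> k_gt0 c_ecg; have [c_sym _] := c_ecg.
split; first split.
- move=> [d [d_ultra d_rep]].
  split; first exact: no_rainbow_of_symbolic_ultrametric d_ultra d_rep.
  move=> i; apply: is_sep_perm_graph_of_P4_free (symmetric_mono i c_sym) _.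
  exact: mono_P4_free_of_symbolic_ultrametric d_ultra d_rep.
- move=> [no_rainbow mono_sep]; exists c; split=> //.
  apply: symbolic_ultrametric_of_colouring => // i.
  exact: P4_free_of_is_sep_perm_graph (symmetric_mono i c_sym) (mono_sep i).
move=> [d [d_ultra d_rep]] W i _.
have induced_sym : forall u v, u != v -> induced c W u v = induced c W v u.
  by move=> u v uv; apply: c_sym.
apply: is_sep_perm_graph_of_P4_free (symmetric_mono i induced_sym) _.
apply: P4_free_mono_induced.
exact: mono_P4_free_of_symbolic_ultrametric d_ultra d_rep.
Qed.
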